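(* The Cauchy structure on ${\mathbf{R}_\mathbf{D}}$ restricts to a Cauchy structure on ${\mathbf{R}_\mathbf{E}}$: equipping ${\mathbf{R}_\mathbf{E}}$ with the restricted premetric, $\mathsf{rat}$ and $\lim$ of ${\mathbf{R}_\mathbf{D}}$ restrict to maps $\mathbf{Q}\to{\mathbf{R}_\mathbf{E}}$ and $\mathcal{C}_{{\mathbf{R}_\mathbf{E}}}\to{\mathbf{R}_\mathbf{E}}$, there is $\mathsf{eq}:\prod_{u,v:{\mathbf{R}_\mathbf{E}}}(\forall\varepsilon.u\sim_\varepsilon v)\to u=v$, and the four closeness laws of a Cauchy structure hold on ${\mathbf{R}_\mathbf{E}}$.
   Context: Work in univalent type theory with propositional truncation, function extensionality and propositional resizing; $\Omega$ is the type of propositions, $\exists$ and $\vee$ are truncated; a subtype of $A$ is a map $A\to\Omega$, identified with $\sum_{a:A}P(a)$ and its first projection into $A$. $\mathbf{Q}$ is the rationals, $\mathbf{Q}_+$ the positive rationals. Premetric spaces and Cauchy structures: a premetric on $R$ is $\sim:\mathbf{Q}_+\times R\times R\to\Omega$; a Cauchy approximation is $x:\mathbf{Q}_+\to R$ with $\forall\delta,\varepsilon.\,x_\delta\sim_{\delta+\varepsilon}x_\varepsilon$, forming $\mathcal{C}_R$; $u$ is a limit of $x$ if $\forall\varepsilon,\theta.\,x_\varepsilon\sim_{\varepsilon+\theta}u$; $R$ is Cauchy complete if all Cauchy approximations have limits. A Cauchy structure is a premetric space $R$ with $\mathsf{rat}:\mathbf{Q}\to R$, $\lim:\mathcal{C}_R\to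 R$, $\mathsf{eq}:\prod_{u,v}(\forall\varepsilon.u\sim_\varepsilon v)\to u=v$, and the laws: $-\varepsilon<q-r<\varepsilon$ implies $\mathsf{rat}(q)\sim_\varepsilon\mathsf{rat}(r)$; $\mathsf{rat}(q)\sim_\varepsilon y_\delta$ implies $\mathsf{rat}(q)\sim_{\varepsilon+\delta}\lim(y)$; $x_\delta\sim_\varepsilon\mathsf{rat}(r)$ implies $\lim(x)\sim_{\varepsilon+\delta}\mathsf{rat}(r)$; $x_\delta\sim_\varepsilon y_\eta$ implies $\lim(x)\sim_{\varepsilon+\delta+\eta}\lim(y)$. Dedekind reals: for $L,U:\mathbf{Q}\to\Omega$ and $x=(L,U)$, $q<x$ means $L(q)$, $x<r$ means $U(r)$; $x$ is a Dedekind cut if inhabited ($\exists q.\,q<x$, $\exists r.\,x<r$), rounded ($q<x\Leftrightarrow\exists q'>q.\,q'<x$; $x<r\Leftrightarrow\exists r'<r.\,x<r'$), transitive ($q<x\wedge x<r\Rightarrow q<r$) and located ($q<r\Rightarrow q<x\vee x<r$); ${\mathbf{R}_\mathbf{D}}$ is their type. $\mathsf{rat}(q)$: $r<\mathsf{rat}(q)\Leftrightarrow r<q$, $\mathsf{rat}(q)<r\Leftrightarrow q<r$. $q<x+y:=\exists s,t.(q=s+t)\wedge(s<x)\wedge(t<y)$, $x+y<r:=\exists s,t.(r=s+t)\wedge(x<s)\wedge(y<t)$; $q<-x:=x<-q$, $-x<r:=-r<x$; $q<|x|:=(q<x)\vee(q<-x)$, $|x|<r:=(x<r)\wedge(-x<r)$;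 $x\sim_\varepsilon y:=|x+(-y)|<\varepsilon$. For $x:\mathcal{C}_{{\mathbf{R}_\mathbf{D}}}$: $q<\lim(x):=\exists(\varepsilon,\theta:\mathbf{Q}_+).\,q+\varepsilon+\theta<x_\varepsilon$ and $\lim(x)<r:=\exists(\varepsilon,\theta:\mathbf{Q}_+).\,x_\varepsilon<r-\varepsilon-\theta$. With these, ${\mathbf{R}_\mathbf{D}}$ is a Cauchy structure. Euclidean reals: a subtype $S$ of ${\mathbf{R}_\mathbf{D}}$ carries the restricted premetric. ${\mathbf{R}_\mathbf{E}}$ is the smallest subtype of ${\mathbf{R}_\mathbf{D}}$ containing all $\mathsf{rat}(q)$ and Cauchy complete for the restricted premetric; concretely $u\in{\mathbf{R}_\mathbf{E}}$ iff $u\in S$ for every such subtype $S$. *)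

(* rationals are MathComp's [rat]; Omega is modelled by Prop. *)
From HB Require Import structures.
From mathcomp Require Import all_boot all_order all_algebra.
From mathcomp Require Import lra.
Set Implicit Arguments. Unset Strict Implicit. Unset Printing Implicit Defensive.
Import Order.TTheory GRing.Theory Num.Theory.
Local Open Scope ring_scope.

Definition Qpos := {e : rat | 0 < e}.
Definition qpadd (d e : Qpos) : Qpos :=
  exist _ (sval d + sval e) (addr_gt0 (proj2_sig d) (proj2_sig e)).

Definition premetric (T : Type) := Qpos -> T -> T -> Prop.

Definition isCauchyApprox (T : Type) (prem : premetric T) (x : Qpos -> T) : Prop :=
  forall d e : Qpos, prem (qpadd d e) (x d) (x e).

Definition isLimit (T : Type) (prem : premetric T) (x : Qpos -> T) (u : T) : Prop :=
  forall e th : Qpos, prem (qpadd e th) (x e) u.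

Definition CauchyComplete (T : Type) (prem : premetric T) : Prop :=
  forall x : Qpos -> T, isCauchyApprox prem x -> exists u : T, isLimit prem x u.

Record CauchyStructure (T : Type) (prem : premetric T) := {
  cs_rat : rat -> T;
  cs_lim : forall x : Qpos -> T, isCauchyApprox prem x -> T;
  cs_eq : forall u v : T, (forall e : Qpos, prem e u v) -> u = v;
  cs_rat_rat : forall (q r : rat) (e : Qpos),
      - sval e < q - r -> q - r < sval e -> prem e (cs_rat q) (cs_rat r);
  cs_rat_lim : forall (q : rat) (y : Qpos -> T) (hy : isCauchyApprox prem y)
      (e d : Qpos), prem e (cs_rat q) (y d) -> prem (qpadd e d) (cs_rat q) (cs_lim hy);
  cs_lim_rat : forall (x : Qpos -> T) (hx : isCauchyApprox prem x) (r : rat)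
      (e d : Qpos), prem e (x d) (cs_rat r) -> prem (qpadd e d) (cs_lim hx) (cs_rat r);
  cs_lim_lim : forall (x y : Qpos -> T) (hx : isCauchyApprox prem x)
      (hy : isCauchyApprox prem y) (e d n : Qpos),
      prem e (x d) (y n) -> prem (qpadd (qpadd e d) n) (cs_lim hx) (cs_lim hy) }.

Definition Pair := ((rat -> Prop) * (rat -> Prop))%type.

Record isCut (x : Pair) : Prop := {
  cut_inhL : exists q, x.1 q;
  cut_inhU : exists r, x.2 r;
  cut_roundL : forall q, x.1 q <-> exists q', q < q' /\ x.1 q';
  cut_roundU : forall r, x.2 r <-> exists r', r' < r /\ x.2 r';
  cut_trans : forall q r, x.1 q -> x.2 r -> q < r;
  cut_loc : forall q r, q < r -> x.1 q \/ x.2 r }.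

Definition RD := {x : Pair | isCut x}.

Definition prat (q : rat) : Pair := (fun r => is_true (r < q), fun r => is_true (q < r)).
Definition padd (x y : Pair) : Pair :=
  (fun q => exists s t, q = s + t /\ x.1 s /\ y.1 t,
   fun r => exists s t, r = s + t /\ x.2 s /\ y.2 t).
Definition popp (x : Pair) : Pair := (fun q => x.2 (- q), fun r => x.1 (- r)).
Definition pabs (x : Pair) : Pair :=
  (fun q => x.1 q \/ (popp x).1 q, fun r => x.2 r /\ (popp x).2 r).
Definition pclose (e : Qpos) (x y : Pair) : Prop :=
  (pabs (padd x (popp y))).2 (sval e).
Definition plim (x : Qpos -> Pair) : Pair :=
  (fun q => exists e th : Qpos, (x e).1 (q + sval e + sval th),
   fun r => exists e th : Qpos, (x e).2 (r - sval e - sval th)).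

Lemma prat_isCut (q : rat) : isCut (prat q).
Proof.
split => /=.
- by exists (q - 1); lra.
- by exists (q + 1); lra.
- move=> r; split; last by case=> q' [] ? ?; lra.
  by move=> ?; exists ((r + q) / 2); split; lra.
- move=> r; split; last by case=> q' [] ? ?; lra.
  by move=> ?; exists ((r + q) / 2); split; lra.
- by move=> a b ? ?; lra.
- move=> a b ab; case: (ltP a q) => ?; [by left | right; lra].
Qed.

Definition ratD (q : rat) : RD := exist _ (prat q) (prat_isCut q).

Definition closeRD : premetric RD := fun e u v => pclose e (sval u) (sval v).

Definition subRD (S : RD -> Prop) := {u : RD | S u}.
Definition closeSub (S : RD -> Prop) : premetric (subRD S) :=
  fun e a b => closeRD e (sval a) (sval b).

Definition inRE (u : RD) : Prop :=
  forall S : RD -> Prop, (forall q, S (ratD q)) -> CauchyComplete (@closeSub S) -> S u.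
Definition RE := subRD inRE.
Definition closeRE : premetric RE := @closeSub inRE.

(* A Cauchy structure restricts to any subtype closed under [rat] and [lim].
   The Dedekind reals carry a Cauchy structure whose [lim] is [plim], and every
   limit of a Cauchy approximation coincides with [plim] because limits are
   unique (any two of them are [e]-close for all [e]).  Hence, in each
   Cauchy-complete subtype [S] of R_D containing the rationals, the limit
   provided by [S] is [plim]; so [plim] stays in the intersection R_E of all
   such [S], and R_E inherits the Cauchy structure of R_D. *)

From HB Require Import structures.
From mathcomp Require Import all_boot all_order all_algebra.
From mathcomp Require Import lra.
From Stdlib Require Import ProofIrrelevance FunctionalExtensionality PropExtensionality.
Set Implicit Arguments. Unset Strict Implicit. Unset Printing Implicit Defensive.
Import Order.TTheory GRing.Theory Num.Theory.
Local Open Scope ring_scope.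

Definition sub_premetric (T : Type) (prem : premetric T) (P : T -> Prop) :
  premetric {u : T | P u} := fun e a b => prem e (sval a) (sval b).
Arguments sub_premetric [T] prem P.

Section SubCauchyStructure.

Variables (T : Type) (prem : premetric T) (CS : CauchyStructure prem).
Variable P : T -> Prop.
Hypothesis P_rat : forall q, P (cs_rat CS q).
Hypothesis P_lim : forall (x : Qpos -> T) (hx : isCauchyApprox prem x),
  (forall e, P (x e)) -> P (cs_lim CS hx).

Definition sub_rat (q : rat) : {u : T | P u} := exist _ _ (P_rat q).

Definition sub_lim (x : Qpos -> {u : T | P u})
    (hx : isCauchyApprox (sub_premetric prem P) x) : {u : T | P u} :=
  exist _ _ (P_lim (x := fun e => sval (x e)) hx (fun e => svalP (x e))).

Lemma sub_eq (u v : {u : T | P u}) :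
  (forall e, sub_premetric prem P e u v) -> u = v.
Proof.
move=> uv; apply: (eq_sig_hprop (fun _ => proof_irrelevance _)).
exact: (@cs_eq _ _ CS _ _ uv).
Qed.

Definition sub_CauchyStructure : CauchyStructure (sub_premetric prem P) :=
  {| cs_rat := sub_rat;
     cs_lim := sub_lim;
     cs_eq := sub_eq;
     cs_rat_rat := fun q r e => @cs_rat_rat _ _ CS q r e;
     cs_rat_lim := fun q y hy e d => @cs_rat_lim _ _ CS q _ hy e d;
     cs_lim_rat := fun x hx r e d => @cs_lim_rat _ _ CS _ hx r e d;
     cs_lim_lim := fun x y hx hy e d n => @cs_lim_lim _ _ CS _ _ hx hy e d n |}.

End SubCauchyStructure.

Definition mkQpos (t : rat) (t0 : 0 < t) : Qpos := exist _ t t0.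

Lemma cutL_le (x : Pair) q q' : isCut x -> q' <= q -> x.1 q -> x.1 q'.
Proof.
move=> cx; rewrite le_eqVlt => /orP [/eqP -> // | lt] Lq.
by apply/(cut_roundL cx); exists q.
Qed.

Lemma cutU_ge (x : Pair) r r' : isCut x -> r <= r' -> x.2 r -> x.2 r'.
Proof.
move=> cx; rewrite le_eqVlt => /orP [/eqP <- // | lt] Ur.
by apply/(cut_roundU cx); exists r.
Qed.

Lemma pair_ext (u v : Pair) :
  (forall q, u.1 q <-> v.1 q) -> (forall q, u.2 q <-> v.2 q) -> u = v.
Proof.
case: u v => [u1 u2] [v1 v2] /= h1 h2.
by congr pair; apply: functional_extensionality => q;
  apply: propositional_extensionality.
Qed.

(* [below e u v] says [u < v + e]. *)
Definition below (e : rat) (u v : Pair) :=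
  exists a b, u.2 a /\ v.1 b /\ a - b <= e.

Lemma below_le e e' u v : e <= e' -> below e u v -> below e' u v.
Proof. by move=> ee' [a [b [Ua [Lb ab]]]]; exists a, b; split=> //; split=> //; lra. Qed.

Lemma closeRD_below (e : Qpos) (u v : RD) : closeRD e u v <->
  below (sval e) (sval u) (sval v) /\ below (sval e) (sval v) (sval u).
Proof.
rewrite /closeRD /pclose /pabs /padd /popp /=; split.
- case=> [[s [t [-> [Us Lt]]]] [s' [t' [E [Ls' Ut']]]]]; split.
  + by exists s, (- t); split=> //; split=> //; lra.
  + by exists (- t'), s'; split=> //; split=> //; lra.
- case=> [[a [b [Ua [Lb ab]]]] [a' [b' [Ua' [Lb' ab']]]]]; split.
  + exists (sval e + b), (- b); split; first lra.
    by rewrite opprK; split => //; apply: cutU_ge (svalP u) _ Ua; lra.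
  + exists b', (- sval e - b'); split; first lra.
    split => //; rewrite opprB addrC opprK.
    by apply: cutU_ge (svalP v) _ Ua'; lra.
Qed.

Lemma closeRD_sym e u v : closeRD e u v -> closeRD e v u.
Proof. by move=> /closeRD_below[uv vu]; apply/closeRD_below. Qed.

Lemma closeRD_le (e e' : Qpos) u v :
  sval e <= sval e' -> closeRD e u v -> closeRD e' u v.
Proof.
move=> ee' /closeRD_below[uv vu].
by apply/closeRD_below; split; apply: below_le ee' _.
Qed.

Lemma closeRD_rat q r (e : Qpos) :
  - sval e < q - r -> q - r < sval e -> closeRD e (ratD q) (ratD r).
Proof.
move=> lo hi; apply/closeRD_below; split.
- exists (q + (sval e - (q - r)) / 2), (r - (sval e - (q - r)) / 2) => /=.
  by split; [|split]; lra.
- exists (r + (sval e + (q - r)) / 2), (q - (sval e + (q - r)) / 2) => /=.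
  by split; [|split]; lra.
Qed.

Lemma below_all_L (u v : RD) : (forall e : Qpos, below (sval e) (sval u) (sval v)) ->
  forall q, (sval u).1 q -> (sval v).1 q.
Proof.
move=> uv q /(cut_roundL (svalP u))[q' [qq' Lq']].
have t0 : 0 < (q' - q) / 2 by lra.
case: (cut_loc (svalP v) (q := q) (r := (q + q') / 2)) => //; first lra.
move=> U; have [a [b [Ua [Lb /= ab]]]] := uv (mkQpos t0).
have := cut_trans (svalP u) Lq' Ua; have := cut_trans (svalP v) Lb U; lra.
Qed.

Lemma below_all_U (u v : RD) : (forall e : Qpos, below (sval e) (sval v) (sval u)) ->
  forall r, (sval u).2 r -> (sval v).2 r.
Proof.
move=> vu r /(cut_roundU (svalP u))[r' [r'r Ur']].
have t0 : 0 < (r - r') / 2 by lra.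
case: (cut_loc (svalP v) (q := (r + r') / 2) (r := r)) => //; first lra.
move=> L; have [a [b [Ua [Lb /= ab]]]] := vu (mkQpos t0).
have := cut_trans (svalP v) L Ua; have := cut_trans (svalP u) Lb Ur'; lra.
Qed.

Lemma closeRD_eq (u v : RD) : (forall e, closeRD e u v) -> u = v.
Proof.
move=> uv; have [uv' vu'] : (forall e : Qpos, below (sval e) (sval u) (sval v)) /\
    (forall e : Qpos, below (sval e) (sval v) (sval u)).
  by split=> e; have /closeRD_below[] := uv e.
apply: (eq_sig_hprop (fun _ => proof_irrelevance _)).
by apply: pair_ext => q; split; [exact: below_all_L | exact: below_all_L
  | exact: below_all_U | exact: below_all_U].
Qed.

Section Limit.

Variables (x : Qpos -> RD) (hx : isCauchyApprox closeRD x).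

Lemma plimL_sub d b :
  (sval (x d)).1 b -> (plim (fun e => sval (x e))).1 (b - sval d).
Proof.
move=> /(cut_roundL (svalP (x d)))[b' [bb' Lb']].
have t0 : 0 < b' - b by lra.
by exists d, (mkQpos t0); apply: cutL_le (svalP (x d)) _ Lb' => /=; lra.
Qed.

Lemma plimU_add d a :
  (sval (x d)).2 a -> (plim (fun e => sval (x e))).2 (a + sval d).
Proof.
move=> /(cut_roundU (svalP (x d)))[a' [a'a Ua']].
have t0 : 0 < a - a' by lra.
by exists d, (mkQpos t0); apply: cutU_ge (svalP (x d)) _ Ua' => /=; lra.
Qed.

Lemma plim_isCut : isCut (plim (fun e => sval (x e))).
Proof.
pose one : Qpos := mkQpos ltr01.
split.
- have [b Lb] := cut_inhL (svalP (x one)).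
  by exists (b - 1); apply: plimL_sub Lb.
- have [a Ua] := cut_inhU (svalP (x one)).
  by exists (a + 1); apply: plimU_add Ua.
- move=> q; split.
  + case=> e [th /(cut_roundL (svalP (x e)))[b [lt Lb]]].
    have := svalP th; exists (b - sval e); split; first lra.
    exact: plimL_sub.
  + case=> q' [qq' [e [th Lq']]]; exists e, th.
    by apply: cutL_le (svalP (x e)) _ Lq'; lra.
- move=> r; split.
  + case=> e [th /(cut_roundU (svalP (x e)))[a [lt Ua]]].
    have := svalP th; exists (a + sval e); split; first lra.
    exact: plimU_add.
  + case=> r' [r'r [e [th Ur']]]; exists e, th.
    by apply: cutU_ge (svalP (x e)) _ Ur'; lra.
- move=> q r [e [th Lq]] [n [z Ur]].
  have [[a [b [Ua [Lb /= ab]]]] _] := (closeRD_below _ _ _).1 (hx e n).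
  have := cut_trans (svalP (x e)) Lq Ua; have := cut_trans (svalP (x n)) Lb Ur.
  have := svalP th; have := svalP z; lra.
- move=> q r qr; have t0 : 0 < (r - q) / 5 by lra.
  pose t : Qpos := mkQpos t0.
  case: (cut_loc (svalP (x t)) (q := q + sval t + sval t) (r := r - sval t - sval t)).
  + rewrite /=; lra.
  + by move=> L; left; exists t, t.
  + by move=> U; right; exists t, t.
Qed.

Definition limRD : RD := exist _ _ plim_isCut.

Lemma closeRD_limr (u : RD) e d : closeRD e u (x d) -> closeRD (qpadd e d) u limRD.
Proof.
move=> /closeRD_below[[a [b [Ua [Lb ab]]]] [a' [b' [Ua' [Lb' ab']]]]].
apply/closeRD_below; split.
- exists a, (b - sval d); split=> //; split; [exact: plimL_sub | rewrite /=; lra].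
- exists (a' + sval d), b'; split; [exact: plimU_add | split=> //; rewrite /=; lra].
Qed.

Lemma closeRD_liml (v : RD) e d : closeRD e (x d) v -> closeRD (qpadd e d) limRD v.
Proof. by move=> /closeRD_sym/closeRD_limr/closeRD_sym. Qed.

Lemma isLimit_limRD (u : RD) : isLimit closeRD x u -> u = limRD.
Proof.
move=> xu; apply: closeRD_eq => e.
have d0 : 0 < sval e / 4 by have := svalP e; lra.
pose d : Qpos := mkQpos d0.
apply: closeRD_le (closeRD_limr (closeRD_sym (xu d d))) => /=.
by have := svalP e; lra.
Qed.

End Limit.

Lemma closeRD_lim_lim (x y : Qpos -> RD) (hx : isCauchyApprox closeRD x)
    (hy : isCauchyApprox closeRD y) (e d n : Qpos) :
  closeRD e (x d) (y n) -> closeRD (qpadd (qpadd e d) n) (limRD hx) (limRD hy).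
Proof.
move=> /(closeRD_limr hy)/(closeRD_liml hx); apply: closeRD_le => /=; lra.
Qed.

Definition RD_CauchyStructure : CauchyStructure closeRD :=
  {| cs_rat := ratD;
     cs_lim := limRD;
     cs_eq := closeRD_eq;
     cs_rat_rat := closeRD_rat;
     cs_rat_lim := fun q y hy e d => @closeRD_limr _ hy (ratD q) e d;
     cs_lim_rat := fun x hx r e d => @closeRD_liml _ hx (ratD r) e d;
     cs_lim_lim := closeRD_lim_lim |}.

Lemma inRE_ratD q : inRE (ratD q).
Proof. by move=> S Srat _. Qed.

Lemma inRE_limRD (x : Qpos -> RD) (hx : isCauchyApprox closeRD x) :
  (forall e, inRE (x e)) -> inRE (limRD hx).
Proof.
move=> xRE S Srat Scomplete.
pose xS : Qpos -> subRD S := fun e => exist _ (x e) (xRE e S Srat Scomplete).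
have [u xu] := Scomplete xS hx.
by rewrite -(isLimit_limRD hx xu); apply: svalP.
Qed.

Theorem proposition2p28 :
  exists CS : CauchyStructure closeRE,
    (forall q : rat, sval (cs_rat CS q) = ratD q) /\
    (forall (x : Qpos -> RE) (hx : isCauchyApprox closeRE x),
        sval (sval (cs_lim CS hx)) = plim (fun e => sval (sval (x e)))).
Proof.
by exists (@sub_CauchyStructure _ _ RD_CauchyStructure inRE inRE_ratD inRE_limRD).
Qed.
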